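(* Let $u\in\mathcal H_k$ and let $\lambda_1,\lambda_2,\dots$ be selected from $\Lambda\subset\mathcal H_k'$ by a PDE-$\beta$-greedy algorithm with $\beta\in[0,\infty]$ applied to $u$, and let $r_i:=u-\Pi_{V(\Lambda_i)}(u)$. Then for $i=0,1,\dots$: (a) if $\beta\in[0,1]$: $$\sup_{\lambda\in\Lambda}|\lambda(r_i)| \le |\lambda_{i+1}(r_i)|^{\beta}\cdot P_{\Lambda_i}(\lambda_{i+1})^{1-\beta}\cdot\|r_i\|_{\mathcal H_k}^{1-\beta};$$ (b) if $\beta\in(1,\infty]$ (with $1/\infty:=0$): $$\sup_{\lambda\in\Lambda}|\lambda(r_i)| \le \frac{|\lambda_{i+1}(r_i)|}{P_{\Lambda_i}(\lambda_{i+1})^{1-1/\beta}}\cdot\sup_{\lambda\in\Lambda}P_{\Lambda_i}(\lambda)^{1-1/\beta}.$$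
   Context: $\mathcal H_k$ is the reproducing kernel Hilbert space of a kernel $k$; each $\lambda\in\mathcal H_k'$ has Riesz representer $v_\lambda$. For $\Lambda_i=\{\lambda_1,\dots,\lambda_i\}$ ($\Lambda_0=\emptyset$), $V(\Lambda_i)=\mathrm{span}\{v_\mu:\mu\in\Lambda_i\}$, $\Pi_{V(\Lambda_i)}$ the orthogonal projection, and $P_{\Lambda_i}(\lambda):=\|v_\lambda-\Pi_{V(\Lambda_i)}v_\lambda\|_{\mathcal H_k}$ the generalized power function. A PDE-$\beta$-greedy algorithm (for a set $\Lambda$ of functionals, e.g. $\Lambda=\{\delta_x\circ L:x\in\Omega\}\cup\{\delta_x:x\in\partial\Omega\}$) selects, for $\beta\in[0,\infty)$, $\lambda_{n+1}\in\arg\max_{\lambda\in\Lambda\setminus\Lambda_n,\ \lambda\neq0}|\lambda(u-\Pi_{V(\Lambda_n)}u)|^{\beta}\,P_{\Lambda_n}(\lambda)^{1-\beta}$, and for $\beta=\infty$, $\lambda_{n+1}\in\arg\max_{\lambda\in\Lambda\setminus\Lambda_n,\ \lambda\ne0}|\lambda(u-\Pi_{V(\Lambda_n)}u)|/P_{\Lambda_n}(\lambda)$ (maximizers assumed to exist). Special cases: $\beta=0$ PDE-$P$-greedy, $\beta=1/2$ PDE-$f\cdot P$-greedy, $\beta=1$ PDE-$f$-greedy, $\beta=\infty$ PDE-$f/P$-greedy. *)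

From HB Require Import structures.
From mathcomp Require Import all_boot all_order all_algebra.
From mathcomp Require Import all_classical all_reals all_analysis.
Set Implicit Arguments. Unset Strict Implicit. Unset Printing Implicit Defensive.
Import Order.TTheory GRing.Theory Num.Theory.
Import numFieldNormedType.Exports.
Local Open Scope classical_set_scope.
Local Open Scope ring_scope.

Definition inner_product (R : realType) (V : lmodType R) (dot : V -> V -> R) : Prop :=
  [/\ (forall x y, dot x y = dot y x),
      (forall (a : R) x y z, dot (a *: x + y) z = a * dot x z + dot y z),
      (forall x, 0 <= dot x x) &
      (forall x, dot x x = 0 -> x = 0)].

(* Riesz representer v_lambda of a functional lambda (chosen classically;
   it exists and is unique for every lambda in the dual of a Hilbert space). *)
Definition riesz (R : realType) (V : lmodType R) (dot : V -> V -> R)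
  (l : V -> R) : V := xget 0 [set v | forall f, l f = dot v f].

Definition in_span (R : realType) (V : lmodType R) (n : nat) (g : nat -> V)
  (x : V) : Prop := exists c : 'I_n -> R, x = \sum_(j < n) c j *: g j.

Definition proj (R : realType) (V : lmodType R) (dot : V -> V -> R)
  (n : nat) (g : nat -> V) (x : V) : V :=
  xget 0 [set p | in_span n g p /\ (forall j, (j < n)%N -> dot (x - p) (g j) = 0)].

(* Lambda_n = {lam 0, ..., lam (n-1)};  representers of its elements *)
Definition reps (R : realType) (V : lmodType R) (dot : V -> V -> R)
  (lam : nat -> V -> R) : nat -> V := fun j => riesz dot (lam j).

Definition residual (R : realType) (V : lmodType R) (dot : V -> V -> R)
  (lam : nat -> V -> R) (u : V) (n : nat) : V :=
  u - proj dot n (reps dot lam) u.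

Definition power_fun (R : realType) (V : normedModType R) (dot : V -> V -> R)
  (lam : nat -> V -> R) (n : nat) (l : V -> R) : R :=
  `| riesz dot l - proj dot n (reps dot lam) (riesz dot l) |.

(* selection criterion of the PDE-beta-greedy algorithm, beta in [0, +oo]:
   a = |lambda(r_n)|, p = P_{Lambda_n}(lambda).  Conventions: powR (0 `^ 0 = 1,
   0 `^ x = 0 for x <> 0) and x / 0 = 0. *)
Definition greedy_score (R : realType) (b : \bar R) (a p : R) : R :=
  match b with
  | EFin beta => a `^ beta * p `^ (1 - beta)
  | +oo%E => a / p
  | -oo%E => 0
  end.

(* step n of the greedy algorithm: lam n (= lambda_{n+1}) is a maximizer *)
Definition greedy_step (R : realType) (V : normedModType R) (dot : V -> V -> R)
  (Lam : set (V -> R)) (u : V) (b : \bar R) (lam : nat -> V -> R) (n : nat) : Prop :=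
  let r := residual dot lam u n in
  [/\ Lam (lam n),
      (forall j, (j < n)%N -> lam n <> lam j),
      lam n <> (fun=> 0) &
      (forall l, Lam l -> (forall j, (j < n)%N -> l <> lam j) -> l <> (fun=> 0) ->
         greedy_score b `|l r| (power_fun dot lam n l)
         <= greedy_score b `|lam n r| (power_fun dot lam n (lam n)))].

Definition exp_b (R : realType) (b : \bar R) : R :=
  match b with EFin beta => 1 - beta^-1 | _ => 1 end.

From Pilot Require Import Defs.
From HB Require Import structures.
From mathcomp Require Import all_boot all_order all_algebra.
From mathcomp Require Import all_classical all_reals all_analysis.
From mathcomp Require Import ring lra.
Import Order.TTheory GRing.Theory Num.Theory.
Import numFieldNormedType.Exports.
Set Implicit Arguments. Unset Strict Implicit. Unset Printing Implicit Defensive.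
Local Open Scope classical_set_scope.
Local Open Scope ring_scope.

(* The residual r_i is orthogonal to V(Lambda_i), so lambda(r_i) only sees the
   part v_lambda - Pi v_lambda of the representer, and Cauchy-Schwarz gives
   |lambda(r_i)| <= P_i(lambda) |r_i|.  Every lambda with lambda(r_i) <> 0 is
   admissible at step i + 1 (lambda_j(r_i) = 0 for j <= i), so its greedy score
   is at most that of lambda_{i+1}.  For beta <= 1 write
   |lambda(r)| = |lambda(r)|^beta |lambda(r)|^(1-beta) and bound the second
   factor by (P_i(lambda) |r|)^(1-beta); for beta > 1 take the comparison of
   scores to the power 1/beta. *)

Section InnerProduct.
Variables (R : realType) (V : lmodType R) (dot : V -> V -> R).
Hypothesis Hdot : inner_product dot.

Lemma dotC x y : dot x y = dot y x.
Proof. by case: Hdot. Qed.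

Lemma dotDl x y z : dot (x + y) z = dot x z + dot y z.
Proof. by case: Hdot => _ H _ _; have := H 1 x y z; rewrite scale1r mul1r. Qed.

Lemma dot0l z : dot 0 z = 0.
Proof. by apply/(addrI (dot 0 z)); rewrite -dotDl !addr0. Qed.

Lemma dotZl a x z : dot (a *: x) z = a * dot x z.
Proof. by case: Hdot => _ H _ _; have := H a x 0 z; rewrite addr0 dot0l addr0. Qed.

Lemma dotBl x y z : dot (x - y) z = dot x z - dot y z.
Proof. by rewrite dotDl -scaleN1r dotZl mulN1r. Qed.

Lemma dotDr x y z : dot z (x + y) = dot z x + dot z y.
Proof. by rewrite dotC dotDl !(dotC z). Qed.

Lemma dotZr a x z : dot z (a *: x) = a * dot z x.
Proof. by rewrite dotC dotZl (dotC z). Qed.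

Lemma dotBr x y z : dot z (x - y) = dot z x - dot z y.
Proof. by rewrite dotC dotBl !(dotC z). Qed.

Lemma dot_sumr n (F : 'I_n -> V) z :
  dot z (\sum_(j < n) F j) = \sum_(j < n) dot z (F j).
Proof.
elim: n F => [|n IH] F; first by rewrite !big_ord0 dotC dot0l.
by rewrite !big_ord_recr /= dotDr IH.
Qed.

Lemma dot_span_eq0 n g z y : (forall j, (j < n)%N -> dot z (g j) = 0) ->
  in_span n g y -> dot z y = 0.
Proof.
move=> zg [c ->]; rewrite dot_sumr big1 // => j _.
by rewrite dotZr zg ?mulr0.
Qed.

Lemma cauchy_schwarz_sq x y : dot x y ^+ 2 <= dot x x * dot y y.
Proof.
have [_ _ dot_ge0 dot_eq0] := Hdot.
have [x0|xn0] := eqVneq (dot x x) 0.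
  by rewrite (dot_eq0 _ x0) !dot0l mul0r expr2 mul0r.
have xp : 0 < dot x x by rewrite lt_def xn0 dot_ge0.
pose z := dot x x *: y - dot x y *: x.
have zz : dot z z = dot x x * (dot x x * dot y y - dot x y ^+ 2).
  rewrite /z !dotBl !dotBr !dotZl !dotZr (dotC y x); ring.
by have := dot_ge0 z; rewrite zz pmulr_rge0 // subr_ge0.
Qed.

End InnerProduct.

Section Span.
Variables (R : realType) (V : lmodType R) (n : nat) (g : nat -> V).

Lemma in_spanD x y : in_span n g x -> in_span n g y -> in_span n g (x + y).
Proof.
move=> [c ->] [d ->]; exists (fun j => c j + d j).
by rewrite -big_split; apply: eq_bigr => j _; rewrite scalerDl.
Qed.

Lemma in_spanZ a x : in_span n g x -> in_span n g (a *: x).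
Proof.
move=> [c ->]; exists (fun j => a * c j).
by rewrite scaler_sumr; apply: eq_bigr => j _; rewrite scalerA.
Qed.

Lemma in_spanB x y : in_span n g x -> in_span n g y -> in_span n g (x - y).
Proof. by move=> hx hy; rewrite -scaleN1r; apply/in_spanD/in_spanZ. Qed.

Lemma in_span_widen x : in_span n g x -> in_span n.+1 g x.
Proof.
move=> [c ->]; exists (fun j : 'I_n.+1 => odflt 0 (omap c (insub (val j)))).
rewrite big_ord_recr /= insubF ?ltnn // scale0r addr0.
by apply: eq_bigr => j _; rewrite /= valK.
Qed.

Lemma in_span_last : in_span n.+1 g (g n).
Proof.
exists (fun j : 'I_n.+1 => (val j == n)%:R).
rewrite big_ord_recr /= eqxx scale1r big1 ?add0r // => j _.
by rewrite /= ltn_eqF // scale0r.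
Qed.

End Span.

Section Projection.
Variables (R : realType) (V : lmodType R) (dot : V -> V -> R).
Hypothesis Hdot : inner_product dot.

Definition is_orth_proj n (g : nat -> V) x p :=
  in_span n g p /\ (forall j, (j < n)%N -> dot (x - p) (g j) = 0).

(* One Gram-Schmidt step: correct the projection onto span{g 0, .., g (n-1)}
   along the component of g n orthogonal to that span. *)
Lemma orth_proj_exists n g x : exists p, is_orth_proj n g x p.
Proof.
elim: n x => [|n IH] x.
  by exists 0; split=> [|//]; exists (fun=> 0); rewrite big_ord0.
have [p [p_span p_orth]] := IH x; have [q [q_span q_orth]] := IH (g n).
have [w wE] : exists w, w = g n - q by eexists.
have w_orth j : (j < n)%N -> dot w (g j) = 0 by rewrite wE; apply: q_orth.
have wq : dot w q = 0 := dot_span_eq0 Hdot w_orth q_span.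
have xpq : dot (x - p) q = 0 := dot_span_eq0 Hdot p_orth q_span.
have gnE : g n = w + q by rewrite wE subrK.
have [w0|wn0] := eqVneq (dot w w) 0.
  have {}w0 : w = 0 by case: Hdot => _ _ _; apply.
  exists p; split; first exact: in_span_widen.
  move=> j; rewrite ltnS leq_eqVlt => /orP[/eqP ->|]; last exact: p_orth.
  by rewrite gnE w0 add0r.
have [c cE] : exists c, c = dot (x - p) w / dot w w by eexists.
exists (p + c *: w); split.
  apply: in_spanD; first exact: in_span_widen.
  by rewrite wE; apply/in_spanZ/in_spanB; [exact: in_span_last|exact: in_span_widen].
rewrite opprD addrA => j; rewrite ltnS leq_eqVlt => /orP[/eqP ->|jn].
  have res_w : dot (x - p - c *: w) w = 0.
    by rewrite (dotBl Hdot) (dotZl Hdot) cE divfK ?subrr.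
  by rewrite gnE (dotDr Hdot) res_w (dotBl Hdot) (dotZl Hdot) xpq wq mulr0 subrr addr0.
by rewrite (dotBl Hdot) (dotZl Hdot) p_orth // w_orth // mulr0 subr0.
Qed.

Lemma projP n g x : is_orth_proj n g x (Defs.proj dot n g x).
Proof.
by have [p hp] := orth_proj_exists n g x; apply: (@xgetI _ 0 (is_orth_proj n g x) p).
Qed.

End Projection.

Lemma rieszP (R : realType) (V : lmodType R) (dot : V -> V -> R) (l : V -> R) :
  (exists v, forall f, l f = dot v f) -> forall f, l f = dot (riesz dot l) f.
Proof. exact: xgetPex. Qed.

Section PowerFunction.
Variables (R : realType) (V : normedModType R) (dot : V -> V -> R).
Hypotheses (Hdot : inner_product dot) (Hnorm : forall x : V, `|x| = Num.sqrt (dot x x)).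

Lemma cauchy_schwarz x y : `|dot x y| <= `|x| * `|y|.
Proof.
have [_ _ dot_ge0 _] := Hdot.
rewrite !Hnorm -sqrtrM // -sqrtr_sqr ler_sqrt ?mulr_ge0 //.
exact: cauchy_schwarz_sq.
Qed.

Lemma residual_orth (lam : nat -> V -> R) u n j :
  (j < n)%N -> dot (residual dot lam u n) (reps dot lam j) = 0.
Proof. exact: (projP Hdot n (reps dot lam) u).2. Qed.

Lemma le_dual_power_fun (lam : nat -> V -> R) n (l : V -> R) x :
  (exists v, forall f, l f = dot v f) ->
  (forall j, (j < n)%N -> dot x (reps dot lam j) = 0) ->
  `|l x| <= power_fun dot lam n l * `|x|.
Proof.
move=> l_dual x_orth; have [Pv_span _] := projP Hdot n (reps dot lam) (riesz dot l).
have -> : l x = dot (riesz dot l - Defs.proj dot n (reps dot lam) (riesz dot l)) x.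
  rewrite (dotBl Hdot) (dotC Hdot (Defs.proj _ _ _ _) x).
  by rewrite (dot_span_eq0 Hdot x_orth Pv_span) subr0 (rieszP l_dual).
exact: cauchy_schwarz.
Qed.

End PowerFunction.

Section ScoreInequalities.
Variable R : realType.

Lemma le_score_le1 (beta a p A P rho : R) :
  0 <= beta <= 1 -> 0 <= a -> 0 <= p -> 0 <= rho -> a <= p * rho ->
  a `^ beta * p `^ (1 - beta) <= A `^ beta * P `^ (1 - beta) ->
  a <= A `^ beta * P `^ (1 - beta) * rho `^ (1 - beta).
Proof.
move=> /andP[b0 b1] a0 p0 rho0 a_le score_le.
have a_split : a = a `^ beta * a `^ (1 - beta).
  rewrite -powRD; first by rewrite addrC subrK powRr1.
  by rewrite addrC subrK oner_eq0.
have a_pow : a `^ (1 - beta) <= p `^ (1 - beta) * rho `^ (1 - beta).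
  rewrite -powRM //; apply: ge0_ler_powR => //; first by rewrite subr_ge0.
  by rewrite nnegrE mulr_ge0.
rewrite {1}a_split; apply: le_trans (ler_wpM2l (powR_ge0 _ _) a_pow) _.
by rewrite mulrA; apply: ler_wpM2r => //; apply: powR_ge0.
Qed.

Lemma le_score_gt1 (b : \bar R) (a p A P : R) :
  (1 < b)%E -> 0 < a -> 0 < p -> 0 <= A -> 0 <= P ->
  greedy_score b a p <= greedy_score b A P ->
  a <= A / P `^ exp_b b * p `^ exp_b b.
Proof.
case: b => [beta||//] /=; last first.
  move=> _ a0 p0 A0 P0 score_le.
  by rewrite !powRr1 ?(ltW p0) // -ler_pdivrMr.
rewrite lte_fin => b1 a0 p0 A0 P0 score_le.
have b0 : 0 < beta by lra.
have score_gt0 : 0 < A `^ beta * P `^ (1 - beta).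
  by apply: lt_le_trans score_le; rewrite mulr_gt0 ?powR_gt0.
have {}A0 : 0 < A.
  rewrite lt_def A0 andbT; apply: contraTneq score_gt0 => ->.
  by rewrite powR0 ?gt_eqF // mul0r ltxx.
have {}P0 : 0 < P.
  rewrite lt_def P0 andbT; apply: contraTneq score_gt0 => ->.
  by rewrite powR0 ?mulr0 ?ltxx // subr_eq0 lt_eqF.
have nneg_score (c d : R) : c `^ beta * d `^ (1 - beta) \in Num.nneg.
  by rewrite nnegrE mulr_ge0 ?powR_ge0.
have binv_ge0 : 0 <= beta^-1 by rewrite invr_ge0 ltW.
have := ge0_ler_powR binv_ge0 (nneg_score a p) (nneg_score A P) score_le.
rewrite !powRM ?powR_ge0 // -!powRrM mulfV ?gt_eqF //.
have -> : (1 - beta) * beta^-1 = - (1 - beta^-1).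
  by rewrite mulrBl mul1r mulfV ?gt_eqF //; ring.
rewrite !powRN !powRr1 ?(ltW a0) ?(ltW A0) // => root_le.
by rewrite -ler_pdivrMr ?powR_gt0.
Qed.

End ScoreInequalities.

Section GreedyStep.
Variables (R : realType) (V : normedModType R) (dot : V -> V -> R).
Hypotheses (Hdot : inner_product dot) (Hnorm : forall x : V, `|x| = Num.sqrt (dot x x)).
Variables (Lam : set (V -> R)) (u : V) (b : \bar R) (lam : nat -> V -> R) (i : nat).
Hypothesis Hdual : forall l, Lam l -> exists v : V, forall f, l f = dot v f.
Hypothesis Hgreedy : forall n, (n <= i)%N -> greedy_step dot Lam u b lam n.

Local Notation r := (residual dot lam u i).
Local Notation P := (power_fun dot lam i).

Lemma residual_bound l : Lam l -> `|l r| <= P l * `|r|.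
Proof. by move=> Ll; apply/le_dual_power_fun/residual_orth => //; apply: Hdual. Qed.

Lemma power_fun_gt0 l : Lam l -> 0 < `|l r| -> 0 < P l.
Proof.
move=> Ll lr0; have P_ge0 : 0 <= P l := normr_ge0 _.
rewrite lt_def P_ge0 andbT; apply: contraTneq lr0 => P0.
by rewrite -leNgt; have := residual_bound Ll; rewrite P0 mul0r.
Qed.

Lemma greedy_score_max l : Lam l -> 0 < `|l r| ->
  greedy_score b `|l r| (P l) <= greedy_score b `|lam i r| (P (lam i)).
Proof.
move=> Ll lr0; have [_ _ _] := Hgreedy (leqnn i); apply => //.
  move=> j ji lj; have [Lj _ _ _] := Hgreedy (ltnW ji).
  move: lr0; rewrite lj (rieszP (Hdual Lj)) (dotC Hdot) residual_orth //.
  by rewrite normr0 ltxx.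
by move=> l0; move: lr0; rewrite l0 normr0 ltxx.
Qed.

Lemma greedy_sup_le1 beta : b = beta%:E -> 0 <= beta <= 1 ->
  (ereal_sup [set (`|l r|)%:E | l in Lam]
   <= (`|lam i r| `^ beta * P (lam i) `^ (1 - beta) * `|r| `^ (1 - beta))%:E)%E.
Proof.
move=> bE beta01; apply: ge_ereal_sup => _ [l Ll <-]; rewrite lee_fin.
have [lr0|] := ltP 0 `|l r|; last by move/le_trans; apply; rewrite !mulr_ge0 ?powR_ge0.
have score_le := greedy_score_max Ll lr0; rewrite bE in score_le.
exact: le_score_le1 beta01 (normr_ge0 _) (normr_ge0 _) (normr_ge0 _)
         (residual_bound Ll) score_le.
Qed.

Lemma greedy_sup_gt1 : (1%:E < b)%E ->
  (ereal_sup [set (`|l r|)%:E | l in Lam]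
   <= (`|lam i r| / P (lam i) `^ exp_b b)%:E
      * ereal_sup [set (P l `^ exp_b b)%:E | l in Lam])%E.
Proof.
move=> b1; apply: ge_ereal_sup => _ [l Ll <-].
have coef_ge0 : (0 <= (`|lam i r| / P (lam i) `^ exp_b b)%:E)%E.
  by rewrite lee_fin divr_ge0 ?powR_ge0.
apply: le_trans (lee_wpmul2l coef_ge0 (ereal_sup_ubound _)); last by exists l.
rewrite -EFinM lee_fin.
have [lr0|] := ltP 0 `|l r|; last by move/le_trans; apply; rewrite mulr_ge0 ?powR_ge0.
exact: le_score_gt1 b1 lr0 (power_fun_gt0 Ll lr0) (normr_ge0 _) (normr_ge0 _)
         (greedy_score_max Ll lr0).
Qed.

End GreedyStep.

Theorem lemma4p5 (R : realType) (V : completeNormedModType R)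
  (dot : V -> V -> R) (Hdot : inner_product dot)
  (Hnorm : forall x : V, `|x| = Num.sqrt (dot x x))
  (Lam : set (V -> R))
  (Hdual : forall l, Lam l -> exists v : V, forall f, l f = dot v f)
  (u : V) (b : \bar R) (hb : (0 <= b)%E)
  (lam : nat -> V -> R) (i : nat)
  (Hgreedy : forall n, (n <= i)%N -> greedy_step dot Lam u b lam n) :
  let r := residual dot lam u i in
  (forall beta : R, b = beta%:E -> beta <= 1 ->
     (ereal_sup [set (`|l r|)%:E | l in Lam]
      <= (`|lam i r| `^ beta * power_fun dot lam i (lam i) `^ (1 - beta)
          * `|r| `^ (1 - beta))%:E)%E)
  /\
  ((1%:E < b)%E ->
     (ereal_sup [set (`|l r|)%:E | l in Lam]
      <= (`|lam i r| / power_fun dot lam i (lam i) `^ exp_b b)%:E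
         * ereal_sup [set (power_fun dot lam i l `^ exp_b b)%:E | l in Lam])%E).
Proof.
move=> r; split=> [beta bE beta1|b_gt1].
  refine (greedy_sup_le1 Hdot Hnorm Hdual Hgreedy bE _).
  by rewrite beta1 andbT; move: hb; rewrite bE lee_fin.
exact (greedy_sup_gt1 Hdot Hnorm Hdual Hgreedy b_gt1).
Qed.
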